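(* For every formula $\varphi$ of the modal language $\mathcal{L}_m$, $\varphi$ is derivable in $\mathsf{WK}$ if and only if $\varphi^\tau$ is derivable in $\mathsf{ConstCK}$.
   Context: Language $\mathcal{L}$: formulas $\varphi ::= p \mid \bot \mid \varphi\wedge\varphi \mid \varphi\vee\varphi \mid \varphi\to\varphi \mid \varphi \mathrel{\Box\!\!\to} \varphi \mid \varphi \mathrel{\Diamond\!\!\to}\varphi$; $\neg\varphi:=\varphi\to\bot$, $\top:=\neg\bot$, $\varphi\leftrightarrow\psi:=(\varphi\to\psi)\wedge(\psi\to\varphi)$. Modal language $\mathcal{L}_m$: formulas $\varphi ::= p\mid\bot\mid\varphi\wedge\varphi\mid\varphi\vee\varphi\mid\varphi\to\varphi\mid\Box\varphi\mid\Diamond\varphi$. $\mathsf{ConstCK}$: any axiomatisation of intuitionistic propositional logic in $\mathcal{L}$ with modus ponens, plus axioms CM$_\Box$: $(\varphi\mathrel{\Box\!\!\to}\psi\wedge\chi)\to(\varphi\mathrel{\Box\!\!\to}\psi)\wedge(\varphi\mathrel{\Box\!\!\to}\chi)$; CC$_\Box$: $(\varphi\mathrel{\Box\!\!\to}\psi)\wedge(\varphi\mathrel{\Box\!\!\to}\chi)\to(\varphi\mathrel{\Box\!\!\to}\psi\wedge\chi)$; CN$_\Box$: $\varphi\mathrel{\Box\!\!\to}\top$; CN$_\Diamond$: $\neg(\varphi\mathrel{\Diamond\!\!\to}\bot)$; CK$_\Diamond$: $(\varphi\mathrel{\Box\!\!\to}(\psi\to\chi))\to((\varphi\mathrel{\Diamond\!\!\to}\psi)\to(\varphi\mathrel{\Diamond\!\!\to}\chi))$;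 rules RA$_\Box$: from $\varphi\leftrightarrow\rho$ infer $(\varphi\mathrel{\Box\!\!\to}\psi)\leftrightarrow(\rho\mathrel{\Box\!\!\to}\psi)$; RC$_\Box$: from $\psi\leftrightarrow\chi$ infer $(\varphi\mathrel{\Box\!\!\to}\psi)\leftrightarrow(\varphi\mathrel{\Box\!\!\to}\chi)$; RA$_\Diamond$, RC$_\Diamond$: the same with $\mathrel{\Diamond\!\!\to}$. $\mathsf{WK}$ (propositional fragment of Wijesekera's logic): intuitionistic propositional logic in $\mathcal{L}_m$ with modus ponens, plus the rule from $\varphi$ infer $\Box\varphi$, and axioms $\Box(\varphi\to\psi)\to(\Box\varphi\to\Box\psi)$, $\Box(\varphi\to\psi)\to(\Diamond\varphi\to\Diamond\psi)$, $\neg\Diamond\bot$. Translation $(\cdot)^\tau:\mathcal{L}_m\to\mathcal{L}$: $p^\tau=p$, $\bot^\tau=\bot$, $(\rho\circ\psi)^\tau=\rho^\tau\circ\psi^\tau$ for $\circ\in\{\wedge,\vee,\to\}$, $(\Box\psi)^\tau=\top\mathrel{\Box\!\!\to}\psi^\tau$, $(\Diamond\psi)^\tau=\top\mathrel{\Diamond\!\!\to}\psi^\tau$. *)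

Inductive form : Type :=
| Var : nat -> form
| Bot : form
| And : form -> form -> form
| Or : form -> form -> form
| Imp : form -> form -> form
| CBox : form -> form -> form
| CDia : form -> form -> form.

Definition Neg (a : form) : form := Imp a Bot.
Definition Top : form := Neg Bot.
Definition Iff (a b : form) : form := And (Imp a b) (Imp b a).

Inductive ConstCK : form -> Prop :=
| CK_K : forall a b, ConstCK (Imp a (Imp b a))
| CK_S : forall a b c,
    ConstCK (Imp (Imp a (Imp b c)) (Imp (Imp a b) (Imp a c)))
| CK_AndE1 : forall a b, ConstCK (Imp (And a b) a)
| CK_AndE2 : forall a b, ConstCK (Imp (And a b) b)
| CK_AndI : forall a b, ConstCK (Imp a (Imp b (And a b)))
| CK_OrI1 : forall a b, ConstCK (Imp a (Or a b))
| CK_OrI2 : forall a b, ConstCK (Imp b (Or a b))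
| CK_OrE : forall a b c,
    ConstCK (Imp (Imp a c) (Imp (Imp b c) (Imp (Or a b) c)))
| CK_Efq : forall a, ConstCK (Imp Bot a)
| CK_CMBox : forall a b c,
    ConstCK (Imp (CBox a (And b c)) (And (CBox a b) (CBox a c)))
| CK_CCBox : forall a b c,
    ConstCK (Imp (And (CBox a b) (CBox a c)) (CBox a (And b c)))
| CK_CNBox : forall a, ConstCK (CBox a Top)
| CK_CNDia : forall a, ConstCK (Neg (CDia a Bot))
| CK_CKDia : forall a b c,
    ConstCK (Imp (CBox a (Imp b c)) (Imp (CDia a b) (CDia a c)))
| CK_MP : forall a b, ConstCK (Imp a b) -> ConstCK a -> ConstCK b
| CK_RABox : forall a r b, ConstCK (Iff a r) ->
    ConstCK (Iff (CBox a b) (CBox r b))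
| CK_RCBox : forall a b c, ConstCK (Iff b c) ->
    ConstCK (Iff (CBox a b) (CBox a c))
| CK_RADia : forall a r b, ConstCK (Iff a r) ->
    ConstCK (Iff (CDia a b) (CDia r b))
| CK_RCDia : forall a b c, ConstCK (Iff b c) ->
    ConstCK (Iff (CDia a b) (CDia a c)).

Inductive mform : Type :=
| MVar : nat -> mform
| MBot : mform
| MAnd : mform -> mform -> mform
| MOr : mform -> mform -> mform
| MImp : mform -> mform -> mform
| MBox : mform -> mform
| MDia : mform -> mform.

Definition MNeg (a : mform) : mform := MImp a MBot.

Inductive WK : mform -> Prop :=
| WK_K : forall a b, WK (MImp a (MImp b a))
| WK_S : forall a b c,
    WK (MImp (MImp a (MImp b c)) (MImp (MImp a b) (MImp a c)))
| WK_AndE1 : forall a b, WK (MImp (MAnd a b) a)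
| WK_AndE2 : forall a b, WK (MImp (MAnd a b) b)
| WK_AndI : forall a b, WK (MImp a (MImp b (MAnd a b)))
| WK_OrI1 : forall a b, WK (MImp a (MOr a b))
| WK_OrI2 : forall a b, WK (MImp b (MOr a b))
| WK_OrE : forall a b c,
    WK (MImp (MImp a c) (MImp (MImp b c) (MImp (MOr a b) c)))
| WK_Efq : forall a, WK (MImp MBot a)
| WK_KBox : forall a b,
    WK (MImp (MBox (MImp a b)) (MImp (MBox a) (MBox b)))
| WK_KDia : forall a b,
    WK (MImp (MBox (MImp a b)) (MImp (MDia a) (MDia b)))
| WK_NDia : WK (MNeg (MDia MBot))
| WK_MP : forall a b, WK (MImp a b) -> WK a -> WK b
| WK_Nec : forall a, WK a -> WK (MBox a).

Fixpoint tau (p : mform) : form :=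
  match p with
  | MVar n => Var n
  | MBot => Bot
  | MAnd a b => And (tau a) (tau b)
  | MOr a b => Or (tau a) (tau b)
  | MImp a b => Imp (tau a) (tau b)
  | MBox a => CBox Top (tau a)
  | MDia a => CDia Top (tau a)
  end.


(* Erasing the antecedents of the conditionals is a left inverse of [tau]; it
   maps every ConstCK axiom to a WK theorem and every ConstCK rule to a WK
   admissible rule (RA becomes trivial, RC becomes monotonicity of box and
   diamond), which gives the "if" direction.  Conversely, for a fixed
   antecedent, [CBox a] is a normal box: monotone by RC and CM, closed under
   conjunction by CC, and containing every theorem by CN; this is all that is
   needed to derive the translations of the WK axioms and of necessitation. *)

Set Implicit Arguments.
Unset Strict Implicit.

Record hilbert_base (F : Type) (imp conj : F -> F -> F) (Pr : F -> Prop) : Prop := {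
  hb_K : forall a b, Pr (imp a (imp b a));
  hb_S : forall a b c, Pr (imp (imp a (imp b c)) (imp (imp a b) (imp a c)));
  hb_conjI : forall a b, Pr (imp a (imp b (conj a b)));
  hb_conjE1 : forall a b, Pr (imp (conj a b) a);
  hb_conjE2 : forall a b, Pr (imp (conj a b) b);
  hb_MP : forall a b, Pr (imp a b) -> Pr a -> Pr b
}.

Section HilbertCalculus.

Context {F : Type} {imp conj : F -> F -> F} {Pr : F -> Prop}.
Hypothesis HB : hilbert_base imp conj Pr.

Lemma imp_weaken a b : Pr b -> Pr (imp a b).
Proof. exact (hb_MP HB (hb_K HB b a)). Qed.

Lemma imp_app a b c : Pr (imp a (imp b c)) -> Pr (imp a b) -> Pr (imp a c).
Proof. intros Habc Hab. exact (hb_MP HB (hb_MP HB (hb_S HB a b c) Habc) Hab). Qed.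

Lemma imp_refl a : Pr (imp a a).
Proof. exact (imp_app (hb_K HB a (imp a a)) (hb_K HB a a)). Qed.

Lemma imp_trans a b c : Pr (imp a b) -> Pr (imp b c) -> Pr (imp a c).
Proof. intros Hab Hbc. exact (imp_app (imp_weaken a Hbc) Hab). Qed.

Lemma imp_conj a b c : Pr (imp a b) -> Pr (imp a c) -> Pr (imp a (conj b c)).
Proof. intros Hab Hac. exact (imp_app (imp_trans Hab (hb_conjI HB b c)) Hac). Qed.

Lemma imp_curry a b c : Pr (imp (conj a b) c) -> Pr (imp a (imp b c)).
Proof.
  intro Habc.
  exact (imp_trans (hb_conjI HB a b) (hb_MP HB (hb_S HB b _ c) (imp_weaken b Habc))).
Qed.

Lemma imp_uncurry a b c : Pr (imp a (imp b c)) -> Pr (imp (conj a b) c).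
Proof. intro Habc. exact (imp_app (imp_trans (hb_conjE1 HB a b) Habc) (hb_conjE2 HB a b)). Qed.

Lemma conj_intro a b : Pr a -> Pr b -> Pr (conj a b).
Proof. intros Ha Hb. exact (hb_MP HB (hb_MP HB (hb_conjI HB a b) Ha) Hb). Qed.

Lemma conj_elim1 a b : Pr (conj a b) -> Pr a.
Proof. exact (hb_MP HB (hb_conjE1 HB a b)). Qed.

Lemma conj_elim2 a b : Pr (conj a b) -> Pr b.
Proof. exact (hb_MP HB (hb_conjE2 HB a b)). Qed.

End HilbertCalculus.

Lemma ConstCK_hilbert_base : hilbert_base Imp And ConstCK.
Proof. split; [exact CK_K | exact CK_S | exact CK_AndI | exact CK_AndE1 | exact CK_AndE2 | exact CK_MP]. Qed.

Lemma WK_hilbert_base : hilbert_base MImp MAnd WK.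
Proof. split; [exact WK_K | exact WK_S | exact WK_AndI | exact WK_AndE1 | exact WK_AndE2 | exact WK_MP]. Qed.

Lemma WK_box_mono a b : WK (MImp a b) -> WK (MImp (MBox a) (MBox b)).
Proof. intro Hab. exact (WK_MP _ _ (WK_KBox a b) (WK_Nec _ Hab)). Qed.

Lemma WK_dia_mono a b : WK (MImp a b) -> WK (MImp (MDia a) (MDia b)).
Proof. intro Hab. exact (WK_MP _ _ (WK_KDia a b) (WK_Nec _ Hab)). Qed.

(* [b] and [And b c] are equivalent when [b] implies [c], so RC and CM give
   monotonicity in the consequent. *)
Lemma CBox_mono a b c : ConstCK (Imp b c) -> ConstCK (Imp (CBox a b) (CBox a c)).
Proof.
  intro Hbc.
  assert (Hb_bc : ConstCK (Iff b (And b c))).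
  { apply (conj_intro ConstCK_hilbert_base); [| apply CK_AndE1].
    exact (imp_conj ConstCK_hilbert_base (imp_refl ConstCK_hilbert_base b) Hbc). }
  apply (imp_trans ConstCK_hilbert_base (conj_elim1 ConstCK_hilbert_base (CK_RCBox a _ _ Hb_bc))).
  exact (imp_trans ConstCK_hilbert_base (CK_CMBox a b c) (CK_AndE2 _ _)).
Qed.

Lemma CBox_K a b c : ConstCK (Imp (CBox a (Imp b c)) (Imp (CBox a b) (CBox a c))).
Proof.
  apply (imp_curry ConstCK_hilbert_base).
  apply (imp_trans ConstCK_hilbert_base (CK_CCBox a (Imp b c) b)).
  apply CBox_mono, (imp_uncurry ConstCK_hilbert_base), (imp_refl ConstCK_hilbert_base).
Qed.

Lemma CBox_nec a b : ConstCK b -> ConstCK (CBox a b).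
Proof.
  intro Hb.
  exact (CK_MP _ _ (CBox_mono a (imp_weaken ConstCK_hilbert_base Top Hb)) (CK_CNBox a)).
Qed.

Lemma ConstCK_tau p : WK p -> ConstCK (tau p).
Proof.
  induction 1; simpl; try (constructor; fail).
  - apply CBox_K.
  - exact (CK_MP _ _ IHWK1 IHWK2).
  - exact (CBox_nec _ IHWK).
Qed.

Fixpoint erase_antecedents (f : form) : mform :=
  match f with
  | Var n => MVar n
  | Bot => MBot
  | And a b => MAnd (erase_antecedents a) (erase_antecedents b)
  | Or a b => MOr (erase_antecedents a) (erase_antecedents b)
  | Imp a b => MImp (erase_antecedents a) (erase_antecedents b)
  | CBox _ b => MBox (erase_antecedents b)
  | CDia _ b => MDia (erase_antecedents b)
  end.

Lemma erase_antecedents_tau p : erase_antecedents (tau p) = p.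
Proof. induction p; simpl; congruence. Qed.

Lemma WK_erase_antecedents f : ConstCK f -> WK (erase_antecedents f).
Proof.
  pose proof (imp_refl WK_hilbert_base) as Hrefl.
  induction 1; simpl in *; try (constructor; fail).
  - apply (imp_conj WK_hilbert_base); apply WK_box_mono; [apply WK_AndE1 | apply WK_AndE2].
  - apply (imp_uncurry WK_hilbert_base).
    exact (imp_trans WK_hilbert_base (WK_box_mono (WK_AndI _ _)) (WK_KBox _ _)).
  - exact (WK_Nec _ (WK_Efq MBot)).
  - exact (WK_MP _ _ IHConstCK1 IHConstCK2).
  - exact (conj_intro WK_hilbert_base (Hrefl _) (Hrefl _)).
  - exact (conj_intro WK_hilbert_base
             (WK_box_mono (conj_elim1 WK_hilbert_base IHConstCK))
             (WK_box_mono (conj_elim2 WK_hilbert_base IHConstCK))).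
  - exact (conj_intro WK_hilbert_base (Hrefl _) (Hrefl _)).
  - exact (conj_intro WK_hilbert_base
             (WK_dia_mono (conj_elim1 WK_hilbert_base IHConstCK))
             (WK_dia_mono (conj_elim2 WK_hilbert_base IHConstCK))).
Qed.

Theorem theorem8 : forall phi : mform, WK phi <-> ConstCK (tau phi).
Proof.
  intro phi. split.
  - apply ConstCK_tau.
  - intro H. rewrite <- (erase_antecedents_tau phi). exact (WK_erase_antecedents H).
Qed.
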